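(* Let $G=(V,E)$ and $G'=(V,E')$ be simple directed graphs on the same vertex set with the same underlying undirected graph, i.e. $\{\{u,v\} : (u,v)\in E\}=\{\{u,v\}:(u,v)\in E'\}$. Let $D:=(E'\setminus E)\cup(E\setminus E')$ and $N:=\mathrm{nbhd}(D)$. Then $$d\mathcal{F}l(G') = d\mathcal{F}l(G'[N]) \uplus \big(d\mathcal{F}l(G)\setminus d\mathcal{F}l(G[N])\big),$$ where $\uplus$ denotes a disjoint union.
   Context: A simple directed graph is a pair $G=(V,E)$ with $V$ finite and $E\subseteq (V\times V)\setminus\{(v,v):v\in V\}$; $(i,j)\in E$ is an edge from $i$ to $j$. For $W\subseteq V$, the induced subgraph $G[W]$ is $(W, E\cap (W\times W))$. A simplex of dimension $d$ in $G$ is a tuple $[v_0,\dots,v_d]$ of distinct vertices such that $(v_a,v_b)\in E$ for all $a<b$ (equivalently, a subgraph of a clique together with a total order on its vertices such that the chosen edges point from lower to higher vertices). The directed flag complex $d\mathcal{F}l(G)$ is the collection of all simplices of all dimensions $d\ge 0$ of $G$; a simplex of an induced subgraph $G[W]$ is regarded as a simplex of $G$. For an (ordered) pair $(i,j)$ of vertices joined by an edge in either direction, $\mathrm{nbhd}((i,j)) = \{i,j\}\cup\big((\mathrm{In}(i)\cup\mathrm{Out}(i))\cap(\mathrm{In}(j)\cup\mathrm{Out}(j))\big)$ where $\mathrm{In}(v)=\{u:(u,v)\in E\}$ and $\mathrm{Out}(v)=\{u:(v,u)\in E\}$ (this set is the same whether computed in $G$ or $G'$, since they have the same underlying undirected graph).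 For a set $D$ of such pairs, $\mathrm{nbhd}(D)=\bigcup_{e\in D}\mathrm{nbhd}(e)$. *)

From mathcomp Require Import all_boot.
Set Implicit Arguments. Unset Strict Implicit. Unset Printing Implicit Defensive.

Definition simple_digraph (V : finType) (E : rel V) : Prop :=
  forall v : V, ~~ E v v.

Definition same_underlying (V : finType) (E E' : rel V) : Prop :=
  forall u v : V, (E u v || E v u) = (E' u v || E' v u).

Definition induced_rel (V : finType) (W : {set V}) (E : rel V) : rel V :=
  fun x y => [&& E x y, x \in W & y \in W].

Definition is_simplex (V : finType) (W : {set V}) (E : rel V) (s : seq V) : bool :=
  [&& s != [::], all (fun v => v \in W) s, uniq s & pairwise E s].

Definition dFl (V : finType) (E : rel V) : pred (seq V) :=
  fun s => is_simplex [set: V] E s.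

(* Directed flag complex of the induced subgraph G[W], whose simplices are
   regarded as simplices of G (tuples of vertices of V). *)
Definition dFl_induced (V : finType) (E : rel V) (W : {set V}) : pred (seq V) :=
  fun s => is_simplex W (induced_rel W E) s.

Definition In_ (V : finType) (E : rel V) (v : V) : {set V} := [set u | E u v].
Definition Out_ (V : finType) (E : rel V) (v : V) : {set V} := [set u | E v u].

Definition nbhd_pair (V : finType) (E : rel V) (i j : V) : {set V} :=
  [set i; j] :|: ((In_ E i :|: Out_ E i) :&: (In_ E j :|: Out_ E j)).

Definition sym_diff_edges (V : finType) (E E' : rel V) : {set V * V} :=
  [set p : V * V | (E' p.1 p.2 && ~~ E p.1 p.2) || (E p.1 p.2 && ~~ E' p.1 p.2)].

Definition nbhd_set (V : finType) (E : rel V) (D : {set V * V}) : {set V} :=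
  \bigcup_(p in D) nbhd_pair E p.1 p.2.

(* Changing the orientation of the edges in D only affects simplices all of
   whose vertices lie in N = nbhd(D).  Indeed, if a simplex of G' has a vertex
   w outside N, then w is adjacent to every other vertex of the simplex; were
   some pair (a, b) of the simplex oriented differently in G, then (a, b) would
   lie in D and w in nbhd((a, b)) ⊆ N.  So the simplices of G' outside N are
   exactly those of G outside N, while the simplices inside N are those of the
   induced subgraph G'[N]. *)
From mathcomp Require Import all_boot.

Section FlagComplex.

Context {V : finType}.
Implicit Types (E : rel V) (W : {set V}) (s : seq V).

Lemma pairwise_adj {r : rel V} {s} :
  pairwise r s -> {in s &, forall x y, x != y -> r x y || r y x}.
Proof.
move=> + x y; elim: s => //= a s IHs /andP [ra rs].
rewrite !inE => /orP [/eqP ->|xs] /orP [/eqP ->|ys]; first by rewrite eqxx.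
- by rewrite (allP ra y ys).
- by rewrite (allP ra x xs) orbT.
- exact: IHs.
Qed.

Lemma same_underlying_sym {E E'} : same_underlying E E' -> same_underlying E' E.
Proof. by move=> EE' u v; rewrite EE'. Qed.

Lemma mem_nbhd_pair E i j w :
  (w \in nbhd_pair E i j) =
  [|| w == i, w == j | (E w i || E i w) && (E w j || E j w)].
Proof. by rewrite /nbhd_pair /In_ /Out_ !inE -orbA. Qed.

Lemma same_underlying_nbhd_pair E E' i j :
  same_underlying E E' -> nbhd_pair E i j = nbhd_pair E' i j.
Proof. by move=> EE'; apply/setP => w; rewrite !mem_nbhd_pair !EE'. Qed.

Lemma sym_diff_edgesC E E' : sym_diff_edges E E' = sym_diff_edges E' E.
Proof. by apply/setP => p; rewrite !inE orbC. Qed.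

Lemma same_underlying_nbhd_set {E E'} :
  same_underlying E E' ->
  nbhd_set E (sym_diff_edges E E') = nbhd_set E' (sym_diff_edges E' E).
Proof.
move=> EE'; rewrite sym_diff_edgesC.
by apply: eq_bigr => p _; apply: same_underlying_nbhd_pair.
Qed.

Lemma pairwise_outside_nbhd_set {E E' s w} :
  same_underlying E E' -> pairwise E' s -> w \in s ->
  w \notin nbhd_set E (sym_diff_edges E E') -> pairwise E s.
Proof.
move=> EE' E's ws wN.
apply: (@sub_in_pairwise _ (mem s) E' E _ s _ E's); last exact/allP.
move=> a b sa sb E'ab; apply/negPn/negP => nEab.
have abD : (a, b) \in sym_diff_edges E E' by rewrite inE /= E'ab nEab.
have wNab : w \notin nbhd_pair E a b.
  by apply: contra wN; apply/subsetP/(bigcup_max (a, b)).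
have wa : w != a by apply: contraNneq wNab => ->; rewrite mem_nbhd_pair eqxx.
have wb : w != b.
  by apply: contraNneq wNab => ->; rewrite mem_nbhd_pair eqxx orbT.
apply: (negP wNab); rewrite mem_nbhd_pair !EE'.
rewrite (pairwise_adj E's _ _ ws sa wa).
by rewrite (pairwise_adj E's _ _ ws sb wb) !orbT.
Qed.

Lemma pairwise_eq_outside_nbhd_set {E E' s w} :
  same_underlying E E' -> w \in s ->
  w \notin nbhd_set E (sym_diff_edges E E') -> pairwise E' s = pairwise E s.
Proof.
move=> EE' ws wN; apply/idP/idP => [|Es].
  by move=> E's; apply: pairwise_outside_nbhd_set EE' E's ws wN.
apply: pairwise_outside_nbhd_set (same_underlying_sym EE') Es ws _.
by rewrite -same_underlying_nbhd_set.
Qed.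

Lemma pairwise_induced_rel E W s :
  all (mem W) s -> pairwise (induced_rel W E) s = pairwise E s.
Proof.
move=> sW; apply/idP/idP; first by apply: sub_pairwise => a b /andP [].
apply: (@sub_in_pairwise _ (mem W) E) sW => a b aW bW Eab.
by rewrite /induced_rel Eab aW bW.
Qed.

Lemma dFl_inducedE E W s : dFl_induced E W s = dFl E s && all (mem W) s.
Proof.
rewrite /dFl_induced /dFl /is_simplex.
have -> : all (mem [set: V]) s by apply/allP => v; rewrite inE.
case sW: (all _ s); last by rewrite !andbF.
by rewrite pairwise_induced_rel // andbT.
Qed.

Lemma dFl_outside_nbhd_set {E E' s} :
  same_underlying E E' ->
  ~~ all (mem (nbhd_set E (sym_diff_edges E E'))) s -> dFl E' s = dFl E s.
Proof.
move=> EE' /allPn [w ws wN].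
by rewrite /dFl /is_simplex (pairwise_eq_outside_nbhd_set EE' ws wN).
Qed.

End FlagComplex.

Theorem lemma2p9 (V : finType) (E E' : rel V) :
  simple_digraph E -> simple_digraph E' -> same_underlying E E' ->
  let N := nbhd_set E (sym_diff_edges E E') in
  (* dFl(G') = dFl(G'[N]) ∪ (dFl(G) \ dFl(G[N])) ... *)
  (forall s : seq V,
      dFl E' s <-> (dFl_induced E' N s \/ (dFl E s /\ ~ dFl_induced E N s))) /\
  (* ... and the union is disjoint. *)
  (forall s : seq V,
      ~ (dFl_induced E' N s /\ (dFl E s /\ ~ dFl_induced E N s))).
Proof.
move=> _ _ EE' N; split=> s; rewrite !dFl_inducedE.
all: have [_|outN] := boolP (all (mem N) s);
  last rewrite (dFl_outside_nbhd_set EE' outN).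
all: rewrite ?andbT ?andbF.
all: by case: (dFl E s); case: (dFl E' s); intuition.
Qed.
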